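(* Let $G$ be a graph, let $R\subseteq V(G)$ be such that $G[R]$ is isomorphic to $F$, and let $C\subseteq V(G)\setminus R$ be a clique in $G$ with $m$ vertices. Then one can admissibly remove from $G$ a subset of $C\cup R$ such that the remaining vertices of $C\cup R$ form a clique with at most $\max(m-1,2)$ vertices.
   Context: $F$ denotes the disjoint union of two vertex-disjoint copies of the complete bipartite graph $K_{5,5}$ (so $F$ has $20$ vertices). Removing a set $T$ of vertices from a graph $G$ is a simple admissible removal if $T$ is an independent set in $G$ and the number of edges between $T$ and $V(G)\setminus T$ is even. Removing a (not necessarily independent) set of vertices is admissible if it can be realised by a sequence of simple admissible removals, each performed in the graph remaining after the previous ones. *)

From mathcomp Require Import all_boot.
Set Implicit Arguments. Unset Strict Implicit. Unset Printing Implicit Defensive.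

Definition simple_graph (T : finType) (e : rel T) : Prop :=
  symmetric e /\ irreflexive e.

Definition independent (T : finType) (e : rel T) (X : {set T}) : Prop :=
  forall x y, x \in X -> y \in X -> ~~ e x y.

Definition clique (T : finType) (e : rel T) (X : {set T}) : Prop :=
  forall x y, x \in X -> y \in X -> x != y -> e x y.

(* number of edges between X and W \ X (X independent, so each such edge
   has exactly one endpoint in X) *)
Definition cut_edges (T : finType) (e : rel T) (W X : {set T}) : nat :=
  \sum_(x in X) #|[set y in W :\: X | e x y]|.

Definition simple_adm (T : finType) (e : rel T) (W X : {set T}) : Prop :=
  X \subset W /\ independent e X /\ ~~ odd (cut_edges e W X).

Inductive admissible (T : finType) (e : rel T) : {set T} -> {set T} -> Prop :=
| adm_nil W : admissible e W set0
| adm_step W X S : simple_adm e W X -> admissible e (W :\: X) S ->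
    admissible e W (X :|: S).

(* The graph F: two disjoint copies of K_{5,5}.
   A vertex is (copy, (side, index)). *)
Definition Fvert := ('I_2 * ('I_2 * 'I_5))%type.
Definition Fedge : rel Fvert :=
  fun u v => (u.1 == v.1) && (u.2.1 != v.2.1).

Definition induced_iso_F (T : finType) (e : rel T) (R : {set T}) : Prop :=
  exists f : Fvert -> T,
    [/\ injective f, f @: [set: Fvert] = R &
        forall u v, e (f u) (f v) = Fedge u v].

From mathcomp Require Import all_boot zify.
Set Implicit Arguments. Unset Strict Implicit. Unset Printing Implicit Defensive.

(* Removing an even-degree vertex, or two non-adjacent odd-degree vertices, is
   always a simple admissible removal.  Repeating such moves inside C ∪ R shrinks
   C ∪ R to a clique, and a clique of F has at most two vertices.  To also lose
   vertices of C, pair a clique vertex c with one "column" of F, i.e. two disjoint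
   edges x1y1, x2y2 with no edges between them: whatever the adjacencies of c to
   this column and the degree parities of the five vertices, a finite search
   exhibits a sequence of such moves inside the column and c that removes c.
   F has five columns, so three vertices of C can be removed this way. *)

Definition deg (T : finType) (e : rel T) (W : {set T}) (v : T) : nat :=
  #|[set y in W | e v y]|.

Section Removal.
Variables (T : finType) (e : rel T).
Hypotheses (e_sym : symmetric e) (e_irr : irreflexive e).

Lemma admissible_cat (W S1 S2 : {set T}) :
  admissible e W S1 -> admissible e (W :\: S1) S2 -> admissible e W (S1 :|: S2).
Proof.
elim=> [W0|W0 X S hX _ IH] h2; first by rewrite set0U; rewrite setD0 in h2.
by rewrite -setUA; apply: adm_step hX _; apply: IH; rewrite setDDl.
Qed.

Definition reach (A W W' : {set T}) : Prop :=
  exists S : {set T}, [/\ S \subset A, admissible e W S & W' = W :\: S].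

Lemma reach_refl (A W : {set T}) : reach A W W.
Proof. by exists set0; rewrite sub0set setD0; split=> //; constructor. Qed.

Lemma reach_trans (A W1 W2 W3 : {set T}) :
  reach A W1 W2 -> reach A W2 W3 -> reach A W1 W3.
Proof.
case=> [S1 [S1A adm1 ->]] [S2 [S2A adm2 ->]]; exists (S1 :|: S2).
by rewrite subUset S1A S2A setDDl; split=> //; apply: admissible_cat.
Qed.

Lemma reach_sub (A B W W' : {set T}) : A \subset B -> reach A W W' -> reach B W W'.
Proof. by move=> AB [S [SA admS ->]]; exists S; split=> //; apply: subset_trans AB. Qed.

Lemma reach_subset (A W W' : {set T}) : reach A W W' -> W' \subset W.
Proof. by case=> S [_ _ ->]; apply: subsetDl. Qed.

Lemma reach_keep (A W W' : {set T}) x :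
  reach A W W' -> x \in W -> x \notin A -> x \in W'.
Proof.
case=> S [SA _ ->] xW xA; rewrite inE xW andbT.
by apply: contra xA; apply: (subsetP SA).
Qed.

Lemma reach_simple (A W X : {set T}) :
  X \subset A -> simple_adm e W X -> reach A W (W :\: X).
Proof.
move=> XA admX; exists X; split=> //.
by rewrite -[X]setU0; apply: adm_step admX _; constructor.
Qed.

Lemma cut_edges_indep (W X : {set T}) :
  independent e X -> cut_edges e W X = \sum_(x in X) deg e W x.
Proof.
move=> indX; apply: eq_bigr => x xX; apply: eq_card => y; rewrite !inE.
case: (boolP (y \in X)) => //= yX; by rewrite (negbTE (indX _ _ xX yX)) andbF.
Qed.

Lemma deg_setD1 (W : {set T}) v w : v \in W -> deg e W w = e w v + deg e (W :\ v) w.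
Proof.
move=> vW; rewrite /deg (cardsD1 v) !inE vW; congr (_ + _).
by apply: eq_card => y; rewrite !inE andbA.
Qed.

Lemma odd_deg_setD1 (W : {set T}) v w :
  v \in W -> odd (deg e (W :\ v) w) = odd (deg e W w) (+) e w v.
Proof. by move=> vW; rewrite (deg_setD1 w vW) oddD oddb addbAC addbb. Qed.

Lemma reach_even (A W : {set T}) v :
  v \in A -> v \in W -> ~~ odd (deg e W v) -> reach A W (W :\ v).
Proof.
move=> vA vW even_v; apply: reach_simple; first by rewrite sub1set.
have indv : independent e [set v] by move=> x y /set1P-> /set1P->; rewrite e_irr.
by split; [rewrite sub1set | split=> //; rewrite cut_edges_indep // big_set1].
Qed.

Lemma reach_odd_pair (A W : {set T}) u v :
  u \in A -> v \in A -> u \in W -> v \in W -> u != v -> ~~ e u v ->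
  odd (deg e W u) -> odd (deg e W v) -> reach A W (W :\ u :\ v).
Proof.
move=> uA vA uW vW uv euv odd_u odd_v.
have indX : independent e [set u; v].
  by move=> x y /set2P[]-> /set2P[]->; rewrite ?e_irr // e_sym.
rewrite setDDl; apply: reach_simple; first by rewrite subUset !sub1set uA vA.
split; first by rewrite subUset !sub1set uW vW.
split=> //; rewrite cut_edges_indep // big_setU1 ?inE //= big_set1.
by rewrite oddD odd_u odd_v.
Qed.

Lemma clique_or_reach_proper (A W : {set T}) :
  clique e (A :&: W) \/ exists2 W', reach A W W' & W' \proper W.
Proof.
have inAW x : x \in A :&: W -> x \in A /\ x \in W by rewrite inE => /andP.
case: (boolP [exists v in A :&: W, ~~ odd (deg e W v)]).
  case/existsP=> v /andP[/inAW[vA vW] even_v]; right; exists (W :\ v).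
    exact: reach_even.
  exact: properD1.
rewrite negb_exists_in => /forall_inP odd_AW.
case: (boolP [exists u in A :&: W, exists v in A :&: W, (u != v) && ~~ e u v]).
  case/exists_inP=> u uAW /exists_inP[v vAW /andP[uv euv]].
  have [[uA uW] [vA vW]] := (inAW _ uAW, inAW _ vAW).
  right; exists (W :\ u :\ v).
    by apply: reach_odd_pair => //; apply/negbNE; [apply: odd_AW uAW|apply: odd_AW vAW].
  by apply: sub_proper_trans (subD1set _ _) (properD1 uW).
move=> no_pair; left=> x y xAW yAW xy; apply: contraNT no_pair => exy.
by apply/exists_inP; exists x => //; apply/exists_inP; exists y; rewrite // xy.
Qed.

Lemma reach_clique (A W : {set T}) : exists2 W', reach A W W' & clique e (A :&: W').
Proof.
elim: {W}_.+1 {-2}W (ltnSn #|W|) => // n IH W Wn.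
case: (clique_or_reach_proper A W) => [cl | [W1 rW1 W1W]].
  by exists W => //; apply: reach_refl.
have [|W' rW' cl] := IH W1; first by apply: leq_trans (proper_card W1W) _.
by exists W' => //; apply: reach_trans rW1 rW'.
Qed.

End Removal.

(* Whether [t] can be removed by at most [k] moves, each removing a vertex of [vs]
   of even degree or two non-adjacent vertices of [vs] of odd degree: [rem] is the
   set of remaining vertices and [P] the set of those of odd degree in the ambient
   graph.  Quantifying over the explicit list [vs] keeps it computable. *)
Section Clearable.
Variables (V : eqType) (adj : rel V) (t : V) (vs : seq V).

Fixpoint clearable (k : nat) (rem P : pred V) : bool :=
  ~~ rem t ||
  if k is k'.+1 then
    has (fun i => [&& rem i, ~~ P i &
           clearable k' [pred l | rem l && (l != i)] [pred l | P l (+) adj l i]]) vs ||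
    has (fun i => has (fun j => [&& rem i, rem j, i != j, ~~ adj i j, P i, P j &
           clearable k' [pred l | [&& rem l, l != i & l != j]]
                        [pred l | P l (+) adj l i (+) adj l j]]) vs) vs
  else false.

End Clearable.

Lemma eq_clearable (V : eqType) (adj adj' : rel V) t vs k (rem rem' P P' : pred V) :
  adj =2 adj' -> rem =1 rem' -> P =1 P' ->
  clearable adj t vs k rem P = clearable adj' t vs k rem' P'.
Proof.
move=> adjE; elim: k rem rem' P P' => [|k IH] rem rem' P P' remE PE /=; rewrite remE //.
congr (_ || (_ || _)); apply: eq_has => i; [|apply: eq_has => j];
  rewrite !remE !PE ?adjE; [congr [&& _, _ & _] | congr [&& _, _, _, _, _, _ & _]];
  by apply: IH => l /=; rewrite ?remE ?PE ?adjE.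
Qed.

Section ClearableReach.
Variables (T : finType) (e : rel T) (V : eqType) (vv : V -> T).
Variables (adj : rel V) (t : V) (vs : seq V) (A : {set T}).
Hypotheses (e_sym : symmetric e) (e_irr : irreflexive e) (vv_inj : injective vv).
Hypothesis adjE : forall i j, adj i j = e (vv i) (vv j).

Lemma clearable_reach k (rem P : pred V) (W : {set T}) :
  (forall i, rem i -> vv i \in A) ->
  (forall i, (vv i \in W) = rem i) ->
  (forall i, rem i -> odd (deg e W (vv i)) = P i) ->
  clearable adj t vs k rem P -> exists2 W', reach e A W W' & vv t \notin W'.
Proof.
elim: k rem P W => [|k IH] rem P W remA remW remP /=.
  by rewrite orbF => tW; exists W; [apply: reach_refl | rewrite remW].
case/orP=> [tW | /orP[/hasP[i _ /and3P[ri Pi cl]] | /hasP[i _ /hasP[j _ cl]]]].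
- by exists W; [apply: reach_refl | rewrite remW].
- have [|l|l /andP[rl _]|W' rW' tW'] := IH _ _ (W :\ vv i) _ _ _ cl.
  + by move=> l /andP[rl _]; apply: remA.
  + by rewrite !inE remW (inj_eq vv_inj) andbC.
  + by rewrite /= odd_deg_setD1 ?remW // remP // adjE.
  exists W' => //; apply: reach_trans rW'.
  by apply: reach_even; rewrite ?remA ?remW ?remP.
- case/and4P: cl => ri rj ij /and4P[adj_ij Pi Pj cl].
  have vjW : vv j \in W :\ vv i by rewrite !inE remW rj (inj_eq vv_inj) eq_sym ij.
  have [|l|l /and3P[rl _ _]|W' rW' tW'] := IH _ _ (W :\ vv i :\ vv j) _ _ _ cl.
  + by move=> l /and3P[rl _ _]; apply: remA.
  + rewrite !inE remW !(inj_eq vv_inj).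
    by case: (rem l); rewrite /= ?andbT ?andbF // andbC.
  + by rewrite /= odd_deg_setD1 // odd_deg_setD1 ?remW // remP // !adjE.
  exists W' => //; apply: reach_trans rW'.
  by apply: reach_odd_pair; rewrite ?remA ?remW ?remP ?(inj_eq vv_inj) -?adjE.
Qed.

End ClearableReach.

(* A column of F, with vertices indexed by (copy, side), and an extra vertex
   [None] adjacent to the vertices in [a]. *)
Definition gadget_adj (a : 'I_2 * 'I_2 -> bool) : rel (option ('I_2 * 'I_2)) :=
  fun u v => match u, v with
  | Some u, Some v => (u.1 == v.1) && (u.2 != v.2)
  | Some w, None | None, Some w => a w
  | None, None => false
  end.

Definition gadget_vs : seq (option ('I_2 * 'I_2)) :=
  [:: None; Some (ord0, ord0); Some (ord0, ord_max);
      Some (ord_max, ord0); Some (ord_max, ord_max)].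

Lemma gadget_clearable (a : 'I_2 * 'I_2 -> bool) (P : pred (option ('I_2 * 'I_2))) :
  clearable (gadget_adj a) None gadget_vs 5 predT P.
Proof.
pose idx (w : 'I_2 * 'I_2) := w.1 * 2 + w.2.
have ordE (w : 'I_2 * 'I_2) :
    w \in [:: (ord0, ord0); (ord0, ord_max); (ord_max, ord0); (ord_max, ord_max)].
  by case: w => [[[|[|//]] i] [[|[|//]] j]].
pose a' w := nth false [:: a (ord0, ord0); a (ord0, ord_max);
                           a (ord_max, ord0); a (ord_max, ord_max)] (idx w).
pose P' o := nth false [:: P None; P (Some (ord0, ord0)); P (Some (ord0, ord_max));
                           P (Some (ord_max, ord0)); P (Some (ord_max, ord_max))]
                 (if o is Some w then (idx w).+1 else 0).
(* Reduce to the 2^9 choices of the values of [a] and [P], decided by evaluation. *)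
have aE : a =1 a' by move=> w; move: (ordE w); rewrite !inE => /or4P[]/eqP->.
have PE : P =1 P' by case=> [w|] //; move: (ordE w); rewrite !inE => /or4P[]/eqP->.
rewrite (@eq_clearable _ _ (gadget_adj a') _ _ _ _ predT _ P') //; last first.
  by case=> [w|] [w'|] //=; rewrite aE.
rewrite /a' /P'.
move: (a _) (a _) (a _) (a _) (P _) (P _) (P _) (P _) (P _).
by do 9!case.
Qed.

Lemma leq_card_setIU (T : finType) (A B K : {set T}) :
  K \subset A :|: B -> #|K| <= #|K :&: A| + #|K :&: B|.
Proof. by move=> KAB; rewrite -{1}(setIidPl KAB) setIUr cardsU leq_subr. Qed.

Lemma card_clique_F (K : {set Fvert}) : clique Fedge K -> #|K| <= 2.
Proof.
move=> clK; rewrite -(@card_in_imset _ _ (fun u => u.2.1) K).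
  by apply: leq_trans (max_card _) _; rewrite card_ord.
move=> u v uK vK side_uv; case: (eqVneq u v) => // uv.
by have := clK _ _ uK vK uv; rewrite /Fedge side_uv eqxx andbF.
Qed.

Section InducedF.
Variables (T : finType) (e : rel T) (f : Fvert -> T) (C R : {set T}).
Hypotheses (e_sym : symmetric e) (e_irr : irreflexive e).
Hypotheses (f_inj : injective f) (fR : f @: [set: Fvert] = R).
Hypotheses (fE : forall u v, e (f u) (f v) = Fedge u v) (CR : [disjoint C & R]).

Lemma f_in_R u : f u \in R.
Proof. by rewrite -fR imset_f. Qed.

Lemma f_neq_C u x : x \in C -> f u != x.
Proof.
by move=> xC; apply: contraTneq xC => <-; rewrite (disjointFl CR) ?f_in_R.
Qed.

Lemma card_clique_in_R (K : {set T}) : K \subset R -> clique e K -> #|K| <= 2.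
Proof.
move=> KR clK; apply: leq_trans (card_clique_F (K := f @^-1: K) _).
  apply: leq_trans (leq_imset_card f _); apply/subset_leq_card/subsetP => x xK.
  have /imsetP[u _ xu] : x \in f @: [set: Fvert] by rewrite fR (subsetP KR).
  by rewrite xu imset_f // inE -xu.
move=> u v; rewrite !inE => uK vK uv; rewrite -fE clK //.
by rewrite (inj_eq f_inj).
Qed.

Definition column (j : 'I_5) : {set T} := [set f (a, (b, j)) | a : 'I_2, b : 'I_2].

Lemma column_sub_R j : column j \subset R.
Proof. by apply/subsetP=> x /imset2P[a b _ _ ->]; apply: f_in_R. Qed.

Lemma notin_column x j : x \in C -> x \notin column j.
Proof.
by move=> xC; apply: contraTN xC => /(subsetP (column_sub_R j))/(disjointFl CR)->.
Qed.

Lemma reach_column t j (W : {set T}) :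
  t \in C -> t \in W -> column j \subset W ->
  exists2 W', reach e (t |: column j) W W' & t \notin W'.
Proof.
move=> tC tW colW.
pose vv (o : option ('I_2 * 'I_2)) := if o is Some w then f (w.1, (w.2, j)) else t.
have ft u : f u != t by apply: f_neq_C.
have vv_inj : injective vv.
  case=> [[a b]|] [[a' b']|] //= => [/f_inj [-> ->] // | /eqP | /esym/eqP];
    by rewrite (negbTE (ft _)).
have adjE u v : gadget_adj (fun w => e t (vv (Some w))) u v = e (vv u) (vv v).
  by case: u v => [w|] [w'|] /=; rewrite ?fE ?e_irr // e_sym.
have vv_col w : vv (Some w) \in column j by apply: imset2_f.
have := clearable_reach e_sym e_irr vv_inj adjE (A := t |: column j) (W := W)
  (P := fun o => odd (deg e W (vv o))) _ _ _ (gadget_clearable _ _).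
apply=> // -[w|] //; rewrite ?inE ?vv_col ?orbT ?eqxx //.
exact: (subsetP colW).
Qed.

(* The head of [x :: ts] is removed together with column [size ts]. *)
Lemma reach_remove_seq (ts : seq T) (W : {set T}) :
  size ts <= 5 -> uniq ts -> {subset ts <= C} -> {subset ts <= W} ->
  (forall j : 'I_5, j < size ts -> column j \subset W) ->
  exists2 W', reach e (C :|: R) W W' & {in ts, forall x, x \notin W'}.
Proof.
elim: ts W => [|t ts IH] W size_ts uniq_ts tsC tsW colW.
  by exists W => //; apply: reach_refl.
have lt_ts : size ts < 5 by [].
have [tC tW] := (tsC t (mem_head _ _), tsW t (mem_head _ _)).
have [W1 rW1 tW1] := reach_column tC tW (colW (Ordinal lt_ts) (ltnSn _)).
case/andP: uniq_ts => t_ts uniq_ts.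
have ts_tl : {subset ts <= t :: ts} by move=> x xts; rewrite inE xts orbT.
have [|||W2 rW2 ts_out] := IH W1 (ltnW lt_ts) uniq_ts.
- by move=> x /ts_tl; apply: tsC.
- move=> x xts; apply: (reach_keep rW1); first exact/tsW/ts_tl.
  rewrite !inE negb_or notin_column ?andbT; last exact/tsC/ts_tl.
  by apply: contraNneq t_ts => <-.
- move=> j lt_j; apply/subsetP=> x xcol; apply: (reach_keep rW1).
    by apply: (subsetP (colW j (ltnW lt_j))).
  case/imset2P: xcol => a b _ _ ->; rewrite !inE negb_or f_neq_C //=.
  apply/imset2P=> -[a' b' _ _ /f_inj [_ _ jE]].
  by move: lt_j; rewrite jE ltnn.
exists W2; first apply: reach_trans (reach_sub _ rW1) rW2.
  by rewrite subUset sub1set inE tC subsetU ?column_sub_R ?orbT.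
move=> x; rewrite inE => /predU1P[-> | /ts_out //].
by apply: contra tW1; apply: (subsetP (reach_subset rW2)).
Qed.

Lemma reach_small_clique k :
  k <= 5 ->
  exists2 W, reach e (C :|: R) [set: T] W &
    clique e ((C :|: R) :&: W) /\ #|(C :|: R) :&: W| <= #|C| - minn k #|C| + 2.
Proof.
move=> k_le5; pose ts := take k (enum C).
have size_ts : size ts = minn k #|C| by rewrite size_take_min cardE.
have uniq_ts : uniq ts by rewrite take_uniq ?enum_uniq.
have ts_C : {subset ts <= C} by move=> x /mem_take; rewrite mem_enum.
have [|x _|j _|W1 rW1 ts_out] := reach_remove_seq (W := setT) _ uniq_ts ts_C.
- by rewrite size_ts; lia.
- exact: in_setT.
- exact: subsetT.
have [W2 rW2 clK] := reach_clique e_sym e_irr (C :|: R) W1.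
exists W2; first exact: reach_trans rW1 rW2.
split=> //; set K := (C :|: R) :&: W2.
have KC : #|K :&: C| <= #|C| - size ts.
  have -> : size ts = #|[set x in ts]| by rewrite cardsE (card_uniqP uniq_ts).
  rewrite -cardsDS; last by apply/subsetP=> x; rewrite inE => /ts_C.
  apply/subset_leq_card/subsetP=> x /setIP[/setIP[_ xW2] xC].
  rewrite !inE xC andbT; apply: contraL (subsetP (reach_subset rW2) _ xW2).
  exact: ts_out.
have KR : #|K :&: R| <= 2.
  apply: card_clique_in_R; first exact: subsetIr.
  by move=> x y /setIP[xK _] /setIP[yK _]; apply: clK.
have KCR : #|K| <= #|K :&: C| + #|K :&: R| by apply/leq_card_setIU/subsetIl.
by rewrite size_ts in KC; lia.
Qed.

End InducedF.

Unset Implicit Arguments.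

Theorem mainTheorem8 (T : finType) (e : rel T) (R C : {set T}) :
  simple_graph e ->
  induced_iso_F e R ->
  [disjoint C & R] ->
  clique e C ->
  exists S : {set T},
    [/\ S \subset C :|: R,
        admissible e [set: T] S,
        clique e ((C :|: R) :\: S) &
        #|(C :|: R) :\: S| <= maxn #|C|.-1 2].
Proof.
move=> [e_sym e_irr] [f [f_inj fR fE]] CR _.
have [W [S [SCR admS WE]] [clK cardK]] :=
  reach_small_clique e_sym e_irr f_inj fR fE CR (k := 3) isT.
have KE : (C :|: R) :\: S = (C :|: R) :&: W by rewrite WE setTD setDE.
by exists S; rewrite KE; split=> //; lia.
Qed.
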